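(* Let $G$ be a biconnected series-parallel graph without transitive edges, let $(s,t)$ be a separation pair of $G$ and $G'$ a component of $G$ with respect to $(s,t)$. Then $G'$ is heavy if and only if a longest $s$–$t$ path in $G'$ has length (number of edges) at least four.
   Context: A biconnected graph is series-parallel if it contains no subdivision of $K_4$. A separation pair of a biconnected graph $G$ is a pair $(s,t)$ of vertices with $G-s-t$ disconnected; a transitive edge is an edge joining the two vertices of a separation pair. A component w.r.t. $(s,t)$ is the subgraph induced by $s$, $t$ and the vertex set of one connected component of $G-s-t$; vertices other than $s,t$ are internal. A component is heavy if it has an internal vertex adjacent to neither $s$ nor $t$, and light otherwise. *)

From mathcomp Require Import all_boot.
Set Implicit Arguments. Unset Strict Implicit. Unset Printing Implicit Defensive.

Section Graphs.
Variable T : finType.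
Variable e : rel T.

Definition simple_graph := symmetric e /\ irreflexive e.

Definition connected_in (S : {set T}) (x y : T) : Prop :=
  exists p : seq T, [/\ path e x p, last x p = y & all (mem S) (x :: p)].

Definition connected_set (S : {set T}) : Prop :=
  forall x y, x \in S -> y \in S -> connected_in S x y.

Definition biconnected : Prop :=
  [/\ 3 <= #|T|, connected_set setT & forall v, connected_set [set~ v]].

Definition has_K4_subdivision : Prop :=
  exists (f : 'I_4 -> T) (q : 'I_4 -> 'I_4 -> seq T),
    [/\ injective f,
        forall i j : 'I_4, i < j ->
          path e (f i) (rcons (q i j) (f j)) /\ uniq (q i j),
        forall i j : 'I_4, i < j -> forall x, x \in q i j -> forall k, x != f k
      & forall i j i' j' : 'I_4, i < j -> i' < j' -> (i, j) != (i', j') ->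
          forall x, x \in q i j -> x \notin q i' j'].

Definition series_parallel : Prop := biconnected /\ ~ has_K4_subdivision.

Definition minus2 (s t : T) : {set T} := [set: T] :\ s :\ t.

Definition separation_pair (s t : T) : Prop :=
  s != t /\ ~ connected_set (minus2 s t).

Definition transitive_edge (u v : T) : Prop := e u v /\ separation_pair u v.

Definition no_transitive_edges : Prop := forall u v, ~ transitive_edge u v.

(* C is the vertex set of a connected component of G - s - t:
   nonempty, connected, and closed under adjacency inside G - s - t *)
Definition conn_comp (s t : T) (C : {set T}) : Prop :=
  [/\ C != set0, C \subset minus2 s t, connected_set C
    & forall u v, u \in C -> v \in minus2 s t -> e u v -> v \in C].

(* vertex set of the component G' (induced subgraph on C + s + t) *)
Definition comp_vertices (s t : T) (C : {set T}) : {set T} := C :|: [set s; t].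

(* internal vertices of the component are those of C *)
Definition heavy (s t : T) (C : {set T}) : Prop :=
  exists2 v, v \in C & ~~ e v s && ~~ e v t.

(* p is a (simple) s-t path in the induced subgraph on V with size p edges *)
Definition st_path (V : {set T}) (s t : T) (p : seq T) : Prop :=
  [/\ path e s p, last s p = t, uniq (s :: p) & all (mem V) (s :: p)].

Definition longest_st_path_ge (s t : T) (C : {set T}) (k : nat) : Prop :=
  exists p, st_path (comp_vertices s t C) s t p /\ k <= size p.

End Graphs.

From mathcomp Require Import all_boot zify.
From Stdlib Require Import Classical.
Set Implicit Arguments. Unset Strict Implicit. Unset Printing Implicit Defensive.

(* If C has an internal vertex v adjacent to neither s nor t, then v lies on
   some s-t path of the component (the vertices on such paths include a
   neighbour of s and are closed under adjacency inside C, by 2-connectivity),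
   and both edges of that path at v are interior, so it has at least four edges.
   Conversely, let s p1 p2 ... t be a path of length at least four in a light
   component, so that p2 is adjacent to s or t, and close it into a cycle
   through another component of G - s - t.  The edge from p2 to s (resp. t)
   is a chord of this cycle with both arcs nonempty; as it is not a
   transitive edge, G minus its two ends is connected, so some path in it
   joins the two arcs while avoiding them internally, and this path completes
   a subdivision of K4. *)

Section Walks.
Variables (T : finType) (e : rel T).
Hypothesis esym : symmetric e.

Lemma mem_minus2 (s t u : T) : (u \in minus2 s t) = (u != s) && (u != t).
Proof. by rewrite /minus2 !in_setD1 in_setT andbT andbC. Qed.

Lemma rcons_path_rev a p b : path e a (rcons p b) -> path e b (rcons (rev p) a).
Proof.
have := rev_path e a (rcons p b); rewrite last_rcons belast_rcons rev_cons => ->.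
by rewrite (@eq_path _ _ e) // => u v; exact: esym.
Qed.

Lemma path_first_hit (A : pred T) x p : path e x p -> A (last x p) -> ~~ A x ->
  exists l z, [/\ path e x (rcons l z), uniq (x :: rcons l z), A z, ~~ has A l
               & {subset rcons l z <= p}].
Proof.
move=> pp Alp nAx; case: (shortenP pp) Alp => p' pp' up' sub Alp'.
have : has A p'.
  have : last x p' \in x :: p' by apply: mem_last.
  rewrite inE => /predU1P[lx|lp]; first by move: Alp'; rewrite lx (negbTE nAx).
  by apply/hasP; exists (last x p').
move=> hA; case: (split_find hA) pp' up' sub => z l1 l2 Az nl1 pp' up' sub.
exists l1, z; split => //.
- by move: pp'; rewrite cat_path => /andP[].
- by move: up'; rewrite -cat_cons cat_uniq => /andP[].
- by move=> u hu; apply: sub; rewrite mem_cat hu.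
Qed.

Lemma connected_in_first_hit (S : {set T}) (A : pred T) x y :
  connected_in e S x y -> A y -> ~~ A x ->
  exists l z, [/\ path e x (rcons l z), uniq (x :: rcons l z), A z, ~~ has A l
               & all (mem S) (rcons l z)].
Proof.
case=> p [pp <- /andP[_ /allP Sp]] Ay nAx.
have [l [z [plz ulz Az nAl sub]]] := path_first_hit pp Ay nAx.
by exists l, z; split => //; apply/allP => u /sub /Sp.
Qed.

Definition closed_in (M D : {set T}) :=
  forall u v, u \in D -> v \in M -> e u v -> v \in D.

Lemma closed_in_setD (M D : {set T}) : closed_in M D -> closed_in M (M :\: D).
Proof.
move=> clD u v; rewrite !inE => /andP[uD uM] vM euv; rewrite vM andbT.
by apply: contra uD => vD; apply: clD vD uM _; rewrite esym.
Qed.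

Lemma path_closed_in (M D : {set T}) x l : closed_in M D ->
  x \in D -> path e x l -> all (mem M) l -> all (mem D) l.
Proof.
move=> clD; elim: l x => //= y l IH x xD /andP[exy pl] /andP[yM Ml].
have yD : y \in D by exact: clD exy.
by rewrite yD (IH y).
Qed.

Lemma connected_set_bridge (M : {set T}) (A B : seq T) a b :
  connected_set e M -> a \in M -> b \in M -> a \in A -> b \in B ->
  (forall u, u \in A -> u \notin B) ->
  exists z Q w, [/\ z \in A, w \in B, path e z (rcons Q w), uniq Q
                 & {in Q, forall u, [/\ u \notin A, u \notin B & u \in M]}].
Proof.
move=> cM aM bM aA bB AB; have [p [pp lp /allP Mp]] := cM b a bM aM.
have Alp : last b p \in A by rewrite lp.
have [l1 [z [pz _ zA /hasPn nAl1 sub1]]] := path_first_hit pp Alp (contraL (AB b) bB).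
have Blz : last z (rcons (rev l1) b) \in B by rewrite last_rcons.
have [Q [w [pw uw wB /hasPn nBQ sub2]]] := path_first_hit (rcons_path_rev pz) Blz (AB z zA).
exists z, Q, w; split => //.
  by move: uw => /= /andP[_]; rewrite rcons_uniq => /andP[].
move=> u uQ; have uB := nBQ u uQ.
have : u \in rcons (rev l1) b by apply: sub2; rewrite mem_rcons inE uQ orbT.
rewrite mem_rcons inE mem_rev => /predU1P[ub|ul1]; first by move: uB; rewrite ub => /negP.
split=> //; first exact: nAl1.
by apply: Mp; rewrite inE sub1 ?orbT // mem_rcons inE ul1 orbT.
Qed.

End Walks.

Section StPaths.
Variables (T : finType) (e : rel T) (V : {set T}).
Hypothesis esym : symmetric e.

Definition on_st_path x y v := exists2 p, st_path e V x y p & v \in p.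

Lemma st_path_rev x y p : st_path e V x y p -> st_path e V y x (rev (belast x p)).
Proof.
case=> pp lp up Vp; split.
- by rewrite -lp rev_path (@eq_path _ _ e) // => u w; exact: esym.
- by case: p {pp up Vp} lp => //= u p <-; rewrite rev_cons last_rcons.
- by rewrite -lp -rev_rcons -lastI rev_uniq.
- by rewrite -lp -rev_rcons -lastI all_rev.
Qed.

Lemma on_st_path_sym x y v : v != y -> on_st_path x y v -> on_st_path y x v.
Proof.
move=> vy [p hp vp]; exists (rev (belast x p)); first exact: st_path_rev.
have : v \in x :: p by rewrite inE vp orbT.
by case: hp => _ lp _ _; rewrite lastI lp mem_rcons inE (negbTE vy) mem_rev.
Qed.

Lemma st_path_size4 x y p v : st_path e V x y p -> v \in p -> v != y ->
  ~~ e v x -> ~~ e v y -> 4 <= size p.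
Proof.
case=> pp lp _ _ vp vy nvx nvy; case/splitPr: vp pp lp => a b.
rewrite cat_path last_cat /= => /andP[_ /andP[elv pb]] lb.
case: a elv => [|a1 a] /= elv; first by rewrite esym elv in nvx.
case: b pb lb => [|b1 [|b2 b]] /=.
- by move=> _ vy'; rewrite vy' eqxx in vy.
- by move=> /andP[evb _] by'; rewrite -by' evb in nvy.
- by rewrite size_cat /= !addnS.
Qed.

Lemma st_path_detour x y q1 w q2 v l z :
  st_path e V x y (q1 ++ w :: q2) -> z \in q2 -> e w v -> path e v (rcons l z) ->
  uniq (v :: l) -> ~~ has (mem (x :: q1 ++ w :: q2)) (v :: l) ->
  all (mem V) (v :: l) -> on_st_path x y v.
Proof.
case=> + lp + + zq; case/splitPr: zq lp => r1 r2 lp pp up Vp ewv pvl uvl hvl Vvl.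
exists (q1 ++ w :: v :: l ++ z :: r2); last by rewrite mem_cat !inE eqxx !orbT.
move: pp up Vp hvl; rewrite -cat_rcons -cat_cons => pp up Vp hvl.
have E : x :: q1 ++ w :: v :: l ++ z :: r2 = (x :: rcons q1 w) ++ (v :: l) ++ z :: r2.
  by rewrite /= cat_rcons.
have sub : subseq ((x :: rcons q1 w) ++ z :: r2) ((x :: rcons q1 w) ++ r1 ++ z :: r2).
  by rewrite cat_subseq // suffix_subseq.
split; rewrite ?E.
- move: pp; rewrite -!cat_rcons !cat_path !last_rcons => /and3P[pq1 _ ->].
  by rewrite rcons_path pq1 last_rcons ewv pvl.
- by rewrite -lp !(last_cat, last_cons).
- rewrite uniq_catCA cat_uniq (subseq_uniq sub up) uvl andbT has_sym.
  by apply: contra hvl; apply: sub_has => u; apply: mem_subseq.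
- by move: Vp Vvl; rewrite !all_cat => /and3P[-> _ ->] ->.
Qed.

Lemma belast_rev_split (x : T) q1 w q2 u :
  rev (belast x (q1 ++ w :: rcons q2 u)) = rev q2 ++ w :: rev (x :: q1).
Proof. by rewrite -rcons_cons -rcons_cat belast_rcons -cat_cons rev_cat rev_cons cat_rcons. Qed.

Lemma st_path_extend x y p w v l z :
  st_path e V x y p -> w \in p -> w != y -> e w v -> path e v (rcons l z) ->
  z \in x :: p -> z != w -> uniq (v :: l) -> ~~ has (mem (x :: p)) (v :: l) ->
  all (mem V) (v :: l) -> on_st_path x y v.
Proof.
move=> hp wp wy ewv pvl zp zw uvl hvl Vvl.
have vx : v != x by apply: contra hvl => /eqP ->; rewrite /= mem_head.
case/splitPr: wp hp zp hvl => q1 q2 hp zp hvl.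
move: zp; rewrite -cat_cons mem_cat inE (negbTE zw) /= => /orP[zq1|zq2]; last first.
  exact: st_path_detour hp zq2 ewv pvl uvl hvl Vvl.
apply: on_st_path_sym vx _.
case/lastP: q2 hp hvl => [|q2 u] hp hvl.
  by case: hp => _; rewrite last_cat /= => wy'; rewrite wy' eqxx in wy.
have uy : u = y by case: hp => _; rewrite last_cat /= last_rcons.
have := st_path_rev hp; rewrite belast_rev_split => hr.
apply: st_path_detour hr _ ewv pvl uvl _ Vvl; first by rewrite mem_rev.
apply: contra hvl; apply: sub_has => a.
rewrite !(inE, mem_cat, mem_rev, mem_rcons) uy.
by case: (a == y); case: (a == x); case: (a \in q1); case: (a == w); case: (a \in q2).
Qed.

End StPaths.

Section K4.
Variables (T : finType) (e : rel T).

Lemma mem_nth_flatten (B : seq (seq T)) i x : x \in nth [::] B i -> x \in flatten B.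
Proof.
case: (ltnP i (size B)) => [iB xB|iB]; last by rewrite nth_default.
by apply/flattenP; exists (nth [::] B i); rewrite ?mem_nth.
Qed.

Lemma uniq_nth_flatten (B : seq (seq T)) i : uniq (flatten B) -> uniq (nth [::] B i).
Proof.
elim: B i => [|b B IH] [|i] //=; rewrite cat_uniq => /and3P[ub _ uB] //.
exact: IH.
Qed.

Lemma disjoint_nth_flatten (B : seq (seq T)) i j x : uniq (flatten B) -> i != j ->
  x \in nth [::] B i -> x \notin nth [::] B j.
Proof.
elim: B i j => [|b B IH] i j; first by rewrite nth_nil.
rewrite /= cat_uniq => /and3P[_ /hasPn bB uB].
case: i j => [|i] [|j] //= ij xi; last exact: IH i j uB ij xi.
- by apply/negP => /mem_nth_flatten/bB; rewrite xi.
- exact: bB (mem_nth_flatten xi).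
Qed.

(* Blocks 0-3 of the list in [K4_of_paths] hold the branch vertices, block
   [K4_block i j] the inner vertices of the path from branch i to branch j. *)
Definition K4_block (i j : nat) : nat :=
  match i, j with
  | 0, 1 => 4 | 0, 2 => 5 | 0, 3 => 6 | 1, 2 => 7 | 1, 3 => 8 | 2, 3 => 9
  | _, _ => 10 end.

Lemma K4_block_ge4 i j : i < j -> j < 4 -> 4 <= K4_block i j.
Proof. by do 4?[case: i => [|i]] => //; do 4?[case: j => [|j]]. Qed.

Lemma K4_block_inj i j i' j' : i < j -> j < 4 -> i' < j' -> j' < 4 ->
  K4_block i j = K4_block i' j' -> (i == i') && (j == j').
Proof.
by do 4?[case: i => [|i]] => //; do 4?[case: j => [|j]] => //;
   do 4?[case: i' => [|i']] => //; do 4?[case: j' => [|j']].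
Qed.

Lemma K4_of_paths (a b c d : T) (q01 q02 q03 q12 q13 q23 : seq T) :
  uniq [:: a, b, c, d & q01 ++ q02 ++ q03 ++ q12 ++ q13 ++ q23] ->
  path e a (rcons q01 b) -> path e a (rcons q02 c) -> path e a (rcons q03 d) ->
  path e b (rcons q12 c) -> path e b (rcons q13 d) -> path e c (rcons q23 d) ->
  has_K4_subdivision e.
Proof.
move=> U p01 p02 p03 p12 p13 p23.
pose B := [:: [:: a]; [:: b]; [:: c]; [:: d]; q01; q02; q03; q12; q13; q23].
have {}U : uniq (flatten B) by rewrite /= cats0.
pose f (i : 'I_4) := nth a [:: a; b; c; d] i.
have fB (k : 'I_4) : f k \in nth [::] B k.
  by case: k => [[|[|[|[|k]]]] Hk] //=; rewrite mem_seq1.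
exists f, (fun i j : 'I_4 => nth [::] B (K4_block i j)); split.
- move=> i j fij; apply/val_inj/eqP; apply/negPn/negP => ij.
  by have := disjoint_nth_flatten U ij (fB i); rewrite fij fB.
- case=> [i Hi] [j Hj] /= ij; split; last exact: uniq_nth_flatten.
  by move: Hi Hj ij; do 4?[case: i => [|i] //]; do 4?[case: j => [|j] //].
- move=> i j ij x xq k; apply: contraTneq xq => ->.
  apply: disjoint_nth_flatten U _ (fB k).
  by rewrite neq_ltn (leq_trans (ltn_ord k) (K4_block_ge4 ij (ltn_ord j))).
- move=> i j i' j' ij ij' ne x xq; apply: disjoint_nth_flatten U _ xq.
  apply: contra ne => /eqP /(K4_block_inj ij (ltn_ord j) ij' (ltn_ord j')).
  by case/andP => /eqP/val_inj -> /eqP/val_inj ->.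
Qed.

Hypothesis esym : symmetric e.

Lemma chord_K4 x y al be : e x y -> path e x (rcons al y) -> path e y (rcons be x) ->
  uniq [:: x, y & al ++ be] -> al != [::] -> be != [::] ->
  connected_set e (minus2 x y) -> has_K4_subdivision e.
Proof.
move=> exy pal pbe U nal nbe cn.
have [a0 a0al] : exists a0, a0 \in al.
  by case: (al) nal => // a ? _; exists a; rewrite mem_head.
have [b0 b0be] : exists b0, b0 \in be.
  by case: (be) nbe => // b ? _; exists b; rewrite mem_head.
have minus2_xy u : u \in al ++ be -> u \in minus2 x y.
  move=> uU; rewrite mem_minus2.
  move: U => /= /andP[]; rewrite !inE !negb_or => /andP[_ xU] /andP[yU _].
  by apply/andP; split; [apply: (contraNneq _ xU) | apply: (contraNneq _ yU)] => <-.
have dab u : u \in be -> u \notin al.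
  by move: U; rewrite /= cat_uniq => /and3P[_ _ /and3P[_ /hasPn + _]]; apply.
have b0M : b0 \in minus2 x y by apply: minus2_xy; rewrite mem_cat b0be orbT.
have a0M : a0 \in minus2 x y by apply: minus2_xy; rewrite mem_cat a0al.
have [w [Q [z [wbe zal pQ uQ memQ]]]] := connected_set_bridge esym cn b0M a0M b0be a0al dab.
case/splitPr: zal pal U memQ => a1 a2 pal U memQ.
case/splitPr: wbe pbe U memQ => b1 b2 pbe U memQ.
move: pal pbe; rewrite !rcons_cat !rcons_cons -!cat_rcons !cat_path !last_rcons.
case/andP=> pa1 pa2 /andP[pb1 pb2].
apply: (K4_of_paths (q01 := [::]) _ _ (rcons_path_rev esym pb2) pa1 pb1
                    (rcons_path_rev esym pa2) pQ); last by rewrite /= exy.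
have P : perm_eq [:: x, y, w, z & [::] ++ rev b2 ++ a1 ++ b1 ++ rev a2 ++ Q]
                 ([:: x, y & (a1 ++ z :: a2) ++ b1 ++ w :: b2] ++ Q).
  apply/permP => r; rewrite /= !count_cat /= ?count_cat !count_rev /=.
  by clear -r; lia.
rewrite (perm_uniq P) cat_uniq U uQ andbT; apply/hasPn => u /memQ[ube ual].
rewrite mem_minus2 => /andP[ux uy].
by rewrite !inE mem_cat (negbTE ux) (negbTE uy) (negbTE ual) (negbTE ube).
Qed.
End K4.

Section Component.
Variables (T : finType) (e : rel T) (s t : T) (C : {set T}).
Hypothesis esym : symmetric e.
Hypothesis nst : s != t.
Hypothesis no_cut : forall x, connected_set e [set~ x].
Hypothesis compC : conn_comp e s t C.

Local Notation V := (comp_vertices s t C).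

Lemma closed_first_hit (D : {set T}) (S : {set T}) (A : pred T) v y :
  closed_in e (minus2 s t) D -> v \in D -> connected_in e S v y -> A y -> ~~ A v ->
  {in S, forall u, ~~ A u -> u \in minus2 s t} ->
  exists l z, [/\ path e v (rcons l z), uniq (v :: l), A z && (z \in S), ~~ has A l
                & all (mem D) l].
Proof.
move=> clD vD cn Ay nAv SA.
have [l [z [plz ulz Az nAl /allP Slz]]] := connected_in_first_hit cn Ay nAv.
exists l, z; split.
- exact: plz.
- by move: ulz; rewrite -rcons_cons rcons_uniq => /andP[].
- by rewrite Az; apply: Slz; rewrite mem_rcons mem_head.
- exact: nAl.
apply: (path_closed_in clD vD); first by move: plz; rewrite rcons_path => /andP[].
apply/allP => u ul; apply: SA; first by apply: Slz; rewrite mem_rcons inE ul orbT.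
exact: (hasPn nAl).
Qed.

Lemma C_minus2 u : u \in C -> u \in minus2 s t.
Proof. by case: compC => _ /subsetP + _ _; apply. Qed.

Lemma closed_C : closed_in e (minus2 s t) C.
Proof. by case: compC. Qed.

Lemma C_neq u : u \in C -> (u != s) && (u != t).
Proof. by move/C_minus2; rewrite mem_minus2. Qed.

Lemma C_sub_V : {subset C <= V}.
Proof. by move=> u uC; rewrite inE uC. Qed.

Lemma s_in_V : s \in V. Proof. by rewrite !inE eqxx !orbT. Qed.
Lemma t_in_V : t \in V. Proof. by rewrite !inE eqxx !orbT. Qed.

Lemma on_st_path_adj_s v : v \in C -> e v s -> on_st_path e V s t v.
Proof.
move=> vC evs; have /andP[vs vt] := C_neq vC.
have cn : connected_in e [set~ s] v t by apply: no_cut; rewrite !in_setC1 // eq_sym.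
have SA : {in [set~ s], forall u, ~~ pred1 t u -> u \in minus2 s t}.
  by move=> u; rewrite in_setC1 mem_minus2 => -> ->.
have [l [z [pl ul /andP[/eqP zt _] /hasPn ntl Cl]]] :=
  closed_first_hit (A := pred1 t) closed_C vC cn (eqxx t) vt SA.
subst z; exists (v :: rcons l t); last exact: mem_head.
have sl : s \notin l by apply/negP => /(allP Cl) /C_neq; rewrite eqxx.
have tl : t \notin l by apply/negP => /ntl; rewrite /= eqxx.
split.
- by rewrite /= esym evs.
- by rewrite /= last_rcons.
- move: ul; rewrite /= !(mem_rcons, inE) rcons_uniq.
  case/andP=> vl ->; rewrite (eq_sym s) (negbTE vs) (negbTE nst) (negbTE sl).
  by rewrite (negbTE vt) (negbTE vl) tl.
- by rewrite /= s_in_V C_sub_V //= all_rcons [mem V t]t_in_V (sub_all C_sub_V Cl).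
Qed.

Lemma on_st_path_adj v w : v \in C -> w \in C -> e v w ->
  on_st_path e V s t w -> on_st_path e V s t v.
Proof.
move=> vC wC evw [p hp wp].
have [vp|vp] := boolP (v \in p); first by exists p.
have /andP[vs vt] := C_neq vC; have /andP[ws wt] := C_neq wC.
have tp : t \in s :: p by case: hp => _ <- _ _; apply: mem_last.
have nAv : v \notin s :: p by rewrite inE negb_or vs vp.
have cn : connected_in e [set~ w] v t.
  apply: no_cut; rewrite in_setC1; last by rewrite eq_sym.
  by apply: contraNneq vp => ->.
have SA : {in [set~ w], forall u, u \notin s :: p -> u \in minus2 s t}.
  move=> u _ up; rewrite mem_minus2.
  by apply/andP; split; apply: contraNneq up => ->; rewrite ?mem_head.
have [l [z [pl ul /andP[zp zw] /hasPn nAl Cl]]] :=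
  closed_first_hit (A := mem (s :: p)) closed_C vC cn tp nAv SA.
apply: (st_path_extend esym hp wp wt _ pl zp); rewrite -?in_setC1 //.
- by rewrite esym.
- by rewrite /= negb_or nAv; apply/hasPn.
- by rewrite /= C_sub_V // (sub_all C_sub_V Cl).
Qed.

Lemma on_st_path_of_path v l : v \in C -> path e v (rcons l s) -> all (mem C) l ->
  on_st_path e V s t v.
Proof.
elim: l v => [|w l IH] v vC /=; first by rewrite andbT => evs _; apply: on_st_path_adj_s.
by case/andP=> evw pl /andP[wC Cl]; apply: on_st_path_adj vC wC evw (IH w wC pl Cl).
Qed.

Lemma on_st_path_C v : v \in C -> on_st_path e V s t v.
Proof.
move=> vC; have /andP[vs vt] := C_neq vC.
have cn : connected_in e [set~ t] v s by apply: no_cut; rewrite in_setC1 // eq_sym.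
have SA : {in [set~ t], forall u, ~~ pred1 s u -> u \in minus2 s t}.
  by move=> u; rewrite in_setC1 mem_minus2 => -> ->.
have [l [z [pl _ /andP[/eqP zs _] _ Cl]]] :=
  closed_first_hit (A := pred1 s) closed_C vC cn (eqxx s) vs SA.
by subst z; apply: on_st_path_of_path pl Cl.
Qed.

Lemma heavy_long4 : heavy e s t C -> longest_st_path_ge e s t C 4.
Proof.
case=> v vC /andP[nvs nvt]; have /andP[_ vt] := C_neq vC.
have [p hp vp] := on_st_path_C vC.
by exists p; split; last apply: (st_path_size4 esym hp vp vt nvs nvt).
Qed.

Lemma outer_path : ~ connected_set e (minus2 s t) ->
  exists o, [/\ path e t (rcons o s), uniq o & all (mem (minus2 s t :\: C)) o].
Proof.
move=> sep; pose D := minus2 s t :\: C.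
have /set0Pn[u0 u0D] : D != set0.
  apply/negP; rewrite /D setD_eq0 => /subsetP M2C; apply: sep => x y /M2C xC /M2C yC.
  case: compC => _ _ /(_ x y xC yC) [q [pq lq Cq]] _.
  by exists q; split => //; apply: sub_all Cq => u /C_minus2.
have clD : closed_in e (minus2 s t) D := closed_in_setD esym closed_C.
have /andP[u0s u0t] : (u0 != s) && (u0 != t).
  by move: u0D; rewrite /D inE mem_minus2 => /andP[].
have [l1 [z1 [pl1 _ /andP[/eqP z1s _] _ Dl1]]] :
    exists l z, [/\ path e u0 (rcons l z), uniq (u0 :: l), pred1 s z && (z \in [set~ t]),
                    ~~ has (pred1 s) l & all (mem D) l].
  apply: (closed_first_hit (A := pred1 s) clD u0D _ (eqxx s) u0s).
  - by apply: no_cut; rewrite in_setC1 // eq_sym.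
  - by move=> u; rewrite in_setC1 mem_minus2 => -> ->.
have [l2 [z2 [pl2 _ /andP[/eqP z2t _] _ Dl2]]] :
    exists l z, [/\ path e u0 (rcons l z), uniq (u0 :: l), pred1 t z && (z \in [set~ s]),
                    ~~ has (pred1 t) l & all (mem D) l].
  apply: (closed_first_hit (A := pred1 t) clD u0D _ (eqxx t) u0t).
  - by apply: no_cut; rewrite in_setC1 // eq_sym.
  - by move=> u; rewrite in_setC1 mem_minus2 => -> ->.
subst z1 z2.
have pW : path e t (rcons (rev l2 ++ u0 :: l1) s).
  by rewrite rcons_cat -cat_rcons cat_path (rcons_path_rev esym pl2) last_rcons.
have Ws : pred1 s (last t (rcons (rev l2 ++ u0 :: l1) s)) by rewrite last_rcons /=.
have nts : t != s by rewrite eq_sym.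
have [o [z [po uo /eqP zs /hasPn so sub]]] := path_first_hit pW Ws nts.
subst z; exists o; split => //.
  by move: uo; rewrite /= rcons_uniq => /and3P[].
apply/allP => u uo'.
have : u \in rcons (rev l2 ++ u0 :: l1) s by apply: sub; rewrite mem_rcons inE uo' orbT.
rewrite mem_rcons inE mem_cat mem_rev inE => /or4P[/eqP us|ul2|/eqP->|ul1].
- by move: (so u uo'); rewrite /= us eqxx.
- exact: (allP Dl2).
- exact: u0D.
- exact: (allP Dl1).
Qed.

Lemma st_path_interior L : st_path e V s t (rcons L t) -> all (mem C) L.
Proof.
case=> _ _ U VL; apply/allP => u uL.
move: U; rewrite /= mem_rcons inE rcons_uniq negb_or => /and3P[/andP[_ sL] tL _].
have us : u != s by apply: contraNneq sL => <-.
have ut : u != t by apply: contraNneq tL => <-.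
have : u \in V by apply: (allP VL); rewrite inE mem_rcons inE uL !orbT.
by rewrite !inE (negbTE us) (negbTE ut) !orbF.
Qed.

Lemma uniq_st_path_outer L o : st_path e V s t (rcons L t) -> uniq o ->
  all (mem (minus2 s t :\: C)) o -> uniq ((s :: rcons L t) ++ o).
Proof.
move=> hp uo Do; have CL := st_path_interior hp; case: hp => _ _ U _.
rewrite cat_uniq U uo andbT; apply/hasPn => u uo'.
have : u \in minus2 s t :\: C by apply: (allP Do).
rewrite in_setD mem_minus2 => /and3P[uC us ut].
rewrite inE mem_rcons inE (negbTE us) (negbTE ut) /=.
by apply: contra uC => /(allP CL).
Qed.

Hypothesis notr : no_transitive_edges e.

Lemma edge_minus2_connected x y : e x y -> x != y -> connected_set e (minus2 x y).
Proof. by move=> exy xy; apply: NNPP => ncn; apply: (notr (u := x) (v := y)). Qed.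

Hypothesis sep : ~ connected_set e (minus2 s t).

Lemma light_long_path_K4 L : {in C, forall v, e v s || e v t} ->
  st_path e V s t (rcons L t) -> 3 <= size L -> has_K4_subdivision e.
Proof.
move=> light hp L3.
have [o [po uo Do]] := outer_path sep.
have U := uniq_st_path_outer hp uo Do; have CL := st_path_interior hp.
case: L L3 hp U CL => [|p1 [|p2 [|a al]]] // _ [pp _ _ _] U /and3P[_ p2C _].
move: pp => /= /and3P[sp1 p1p2 pal].
have /andP[p2s p2t] := C_neq p2C.
(* The cycle s p1 p2 a .. al t o s has the chord p2 s, resp. p2 t. *)
case/orP: (light p2 p2C) => [p2Es|p2Et].
- apply: (chord_K4 esym (x := s) (y := p2) (al := [:: p1]) (be := (a :: al) ++ t :: o)).
  + by rewrite esym.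
  + by rewrite /= sp1 p1p2.
  + by rewrite rcons_cat rcons_cons -cat_rcons cat_path last_rcons po andbT.
  + have P : perm_eq [:: s, p2 & [:: p1] ++ (a :: al) ++ t :: o]
                     ((s :: rcons [:: p1, p2, a & al] t) ++ o).
      by apply/permP => r; rewrite /= -cats1 !count_cat /=; clear -r; lia.
    by rewrite (perm_uniq P).
  + by [].
  + by [].
  + by apply: edge_minus2_connected; rewrite 1?esym 1?eq_sym.
- apply: (chord_K4 esym (x := p2) (y := t) (al := a :: al) (be := o ++ [:: s; p1])).
  + exact: p2Et.
  + exact: pal.
  + by rewrite rcons_cat /= -cat_rcons cat_path po last_rcons /= sp1 p1p2.
  + have P : perm_eq [:: p2, t & (a :: al) ++ o ++ [:: s; p1]]
                     ((s :: rcons [:: p1, p2, a & al] t) ++ o).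
      by apply/permP => r; rewrite /= -cats1 !count_cat /=; clear -r; lia.
    by rewrite (perm_uniq P).
  + by [].
  + by case: (o).
  + exact: edge_minus2_connected.
Qed.

Hypothesis noK4 : ~ has_K4_subdivision e.

Lemma long4_heavy : longest_st_path_ge e s t C 4 -> heavy e s t C.
Proof.
case=> p [hp p4].
have [/existsP[v /andP[vC nv]]|/existsPn light] :=
  boolP [exists v in C, ~~ e v s && ~~ e v t]; first by exists v.
exfalso; apply: noK4; case/lastP: p hp p4 => [|L u] hp; first by [].
have ut : u = t by case: hp => _; rewrite last_rcons.
subst u; rewrite size_rcons; apply: light_long_path_K4 hp => v vC.
by have := light v; rewrite vC /= negb_and !negbK.
Qed.

End Component.

Theorem mainTheorem7 (T : finType) (e : rel T) (s t : T) (C : {set T}) :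
  simple_graph e -> series_parallel e -> no_transitive_edges e ->
  separation_pair e s t -> conn_comp e s t C ->
  (heavy e s t C <-> longest_st_path_ge e s t C 4).
Proof.
move=> [esym _] [[_ _ no_cut] noK4] notr [nst sep] compC; split.
- exact: heavy_long4 esym nst no_cut compC.
- exact: long4_heavy esym nst no_cut compC notr sep noK4.
Qed.
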